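(* Let $(X,d)$ be a pointed metric space and let $((x_i,y_i))_{i\in I}$ be a Lipschitz interpolating family in $\widetilde X$ for $\mathrm{Lip}_0(X)$ with Lipschitz interpolation constant $M$. Then for all $i,j\in I$ with $i\neq j$, $$\|m_{x_i,y_i}-m_{x_j,y_j}\|\geq \frac{1}{M},$$ the norm being that of $\mathcal F(X)$ (equivalently of $\mathrm{Lip}_0(X)^*$).
   Context: All spaces are real. $(X,d)$ is a metric space with base point $0$, $\widetilde{X}=\{(x,y)\in X\times X: x\neq y\}$. $\mathrm{Lip}_0(X)$ is the Banach space of Lipschitz $f:X\to\mathbb{R}$ with $f(0)=0$, normed by $\|f\|=\sup_{(x,y)\in\widetilde X}|f(x)-f(y)|/d(x,y)$. For $x\in X$, $\delta_x\in\mathrm{Lip}_0(X)^*$ is $\delta_x(f)=f(x)$; $\mathcal F(X)$ is the closed linear span of $\{\delta_x\}$ in $\mathrm{Lip}_0(X)^*$; for $(x,y)\in\widetilde X$, $m_{x,y}=(\delta_x-\delta_y)/d(x,y)$. For a family $((x_i,y_i))_{i\in I}$ in $\widetilde X$, $T:\mathrm{Lip}_0(X)\to\ell_\infty(I)$, $T(f)=\big((f(x_i)-f(y_i))/d(x_i,y_i)\big)_{i\in I}$; the family is Lipschitz interpolating for $\mathrm{Lip}_0(X)$ if $T$ is surjective, and then its Lipschitz interpolation constant is $M=\inf\{K\geq 1: \forall \alpha\in\ell_\infty(I), \|\alpha\|_\infty\le1,\ \exists f\in\mathrm{Lip}_0(X),\ \|f\|\le K,\ T(f)=\alpha\}$.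 *)

From Stdlib Require Import Reals.
Open Scope R_scope.

Definition is_metric {X : Type} (d : X -> X -> R) : Prop :=
  (forall x y, 0 <= d x y) /\
  (forall x y, d x y = 0 <-> x = y) /\
  (forall x y, d x y = d y x) /\
  (forall x y z, d x z <= d x y + d y z).

Definition Lip0 {X : Type} (d : X -> X -> R) (x0 : X) (f : X -> R) : Prop :=
  f x0 = 0 /\ exists L, forall a b, Rabs (f a - f b) <= L * d a b.

Definition lip_norm_le {X : Type} (d : X -> X -> R) (f : X -> R) (K : R) : Prop :=
  forall a b, a <> b -> Rabs (f a - f b) / d a b <= K.

Definition mol {X : Type} (d : X -> X -> R) (x y : X) (f : X -> R) : R :=
  (f x - f y) / d x y.

(* The family ((x i, y i))_{i in I} is Lipschitz interpolating for Lip_0(X):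
   T : Lip_0(X) -> l_infty(I) is surjective. *)
Definition lip_interpolating {X I : Type} (d : X -> X -> R) (x0 : X)
  (x y : I -> X) : Prop :=
  forall alpha : I -> R, (exists B, forall i, Rabs (alpha i) <= B) ->
    exists f, Lip0 d x0 f /\ forall i, mol d (x i) (y i) f = alpha i.

(* The set of admissible constants K in the definition of the
   Lipschitz interpolation constant M (which is the infimum of this set). *)
Definition interp_constants {X I : Type} (d : X -> X -> R) (x0 : X)
  (x y : I -> X) (K : R) : Prop :=
  1 <= K /\
  forall alpha : I -> R, (forall i, Rabs (alpha i) <= 1) ->
    exists f, Lip0 d x0 f /\ lip_norm_le d f K /\
      forall i, mol d (x i) (y i) f = alpha i.

(* The set {|phi(f)| : f in Lip_0(X), ||f|| <= 1} whose supremum is the dual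
   norm of phi = m_{x1,y1} - m_{x2,y2} in Lip_0(X)^*. *)
Definition dual_vals {X : Type} (d : X -> X -> R) (x0 : X)
  (x1 y1 x2 y2 : X) (t : R) : Prop :=
  exists f, Lip0 d x0 f /\ lip_norm_le d f 1 /\
    t = Rabs (mol d x1 y1 f - mol d x2 y2 f).

Definition is_inf (E : R -> Prop) (M : R) : Prop :=
  (forall K, E K -> M <= K) /\ (forall m, (forall K, E K -> m <= K) -> m <= M).

(* If K is an admissible interpolation constant, interpolating the sequence
   that is 1 at i and 0 elsewhere gives f with ||f|| <= K, m_i(f) = 1 and
   m_j(f) = 0, so f/K lies in the unit ball and (m_i - m_j)(f/K) = 1/K.
   Hence N >= 1/K for every admissible K: 1/N is a lower bound of the
   admissible constants, so 1/N <= M. *)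

From Stdlib Require Import Reals Lra Classical ClassicalDescription.
Open Scope R_scope.

Section Scaling.

Variables (X : Type) (d : X -> X -> R).

Lemma mol_scale (c : R) (f : X -> R) (a b : X) :
  mol d a b (fun z => c * f z) = c * mol d a b f.
Proof. unfold mol, Rdiv; ring. Qed.

Lemma Lip0_scale (x0 : X) (c : R) (f : X -> R) :
  Lip0 d x0 f -> Lip0 d x0 (fun z => c * f z).
Proof.
  intros [Hf0 [L HL]]; split.
  - rewrite Hf0; ring.
  - exists (Rabs c * L); intros a b.
    replace (c * f a - c * f b) with (c * (f a - f b)) by ring.
    rewrite Rabs_mult, Rmult_assoc.
    apply Rmult_le_compat_l; [apply Rabs_pos | apply HL].
Qed.

Lemma lip_norm_le_scale (c K : R) (f : X -> R) :
  0 <= c -> lip_norm_le d f K -> lip_norm_le d (fun z => c * f z) (c * K).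
Proof.
  intros Hc Hf a b Hab.
  replace (c * f a - c * f b) with (c * (f a - f b)) by ring.
  rewrite Rabs_mult, (Rabs_pos_eq c Hc); unfold Rdiv; rewrite Rmult_assoc.
  apply Rmult_le_compat_l; [exact Hc | apply Hf, Hab].
Qed.

End Scaling.

Lemma dual_vals_inv_interp_constant (X I : Type) (d : X -> X -> R) (x0 : X)
  (x y : I -> X) (i j : I) (K : R) :
  i <> j -> interp_constants d x0 x y K ->
  dual_vals d x0 (x i) (y i) (x j) (y j) (/ K).
Proof.
  intros Hij [HK1 HK].
  set (delta_i := fun k => if excluded_middle_informative (k = i) then 1 else 0).
  destruct (HK delta_i) as [f [Hf [Hfn Hfm]]].
  { intro k; unfold delta_i.
    destruct (excluded_middle_informative (k = i));
      rewrite ?Rabs_R1, ?Rabs_R0; lra. }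
  assert (Hfi : mol d (x i) (y i) f = 1).
  { rewrite Hfm; unfold delta_i.
    destruct (excluded_middle_informative (i = i)); congruence. }
  assert (Hfj : mol d (x j) (y j) f = 0).
  { rewrite Hfm; unfold delta_i.
    destruct (excluded_middle_informative (j = i)); congruence. }
  exists (fun z => / K * f z); split; [|split].
  - apply Lip0_scale, Hf.
  - rewrite <- (Rinv_l K) by lra.
    apply lip_norm_le_scale; [left; apply Rinv_0_lt_compat; lra | exact Hfn].
  - rewrite !mol_scale, Hfi, Hfj, Rmult_0_r, Rmult_1_r, Rminus_0_r.
    symmetry; apply Rabs_pos_eq; left; apply Rinv_0_lt_compat; lra.
Qed.

Lemma is_inf_inhabited (E : R -> Prop) (M : R) : is_inf E M -> exists K, E K.
Proof.
  intros [_ Hglb].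
  destruct (classic (exists K, E K)) as [HE | HE]; [exact HE |].
  assert (M + 1 <= M) by (apply Hglb; intros K HK; exfalso; eauto).
  lra.
Qed.

Lemma inv_le_is_inf (E : R -> Prop) (M N : R) :
  is_inf E M -> 0 < N -> (forall K, E K -> 0 < K /\ / K <= N) -> / N <= M.
Proof.
  intros [_ Hglb] HN HE; apply Hglb; intros K HK.
  destruct (HE K HK) as [HK0 HKN].
  rewrite <- (Rinv_inv K).
  apply Rinv_le_contravar; [apply Rinv_0_lt_compat |]; assumption.
Qed.

Theorem proposition3p20 (X : Type) (d : X -> X -> R) (x0 : X)
  (I : Type) (x y : I -> X) (M : R)
  (Hd : is_metric d)
  (Hxy : forall i, x i <> y i)
  (Hinterp : lip_interpolating d x0 x y)
  (HM : is_inf (interp_constants d x0 x y) M) :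
  forall i j : I, i <> j ->
  forall N : R, is_lub (dual_vals d x0 (x i) (y i) (x j) (y j)) N ->
  N >= 1 / M.
Proof.
  intros i j Hij N [HNub _].
  assert (HKN : forall K, interp_constants d x0 x y K -> 0 < K /\ / K <= N).
  { intros K HK; split; [destruct HK; lra |].
    apply HNub, dual_vals_inv_interp_constant; assumption. }
  destruct (is_inf_inhabited _ _ HM) as [K0 HK0].
  destruct (HKN K0 HK0) as [HK0pos HK0N].
  assert (HN : 0 < N) by (pose proof (Rinv_0_lt_compat K0 HK0pos); lra).
  pose proof (inv_le_is_inf _ _ _ HM HN HKN) as HNM.
  assert (HMpos : 0 < M) by (pose proof (Rinv_0_lt_compat N HN); lra).
  apply Rle_ge; unfold Rdiv; rewrite Rmult_1_l, <- (Rinv_inv N).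
  apply Rinv_le_contravar; [apply Rinv_0_lt_compat |]; assumption.
Qed.
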